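(* Let $t,n\in\mathbb N$ and $\alpha_1,\alpha_2,\tau\geq 0$. Let $\mathcal H$ be an $n$-vertex hypergraph with codegree at most $t$ such that every edge has size at least $2(1+\alpha_2)^2$. Let $e\in\mathcal H$, $r:=|V(e)|$, $m_1:=|\{f\in N(e): |V(f)|\geq(1+\alpha_1)r\}|$ and $m_2:=|\{f\in N(e): (1+\alpha_1)r>|V(f)|\geq r/(1+\alpha_2)\}|$. Then (i) $(1+\alpha_1)m_1+\frac{m_2}{1+\alpha_2}\leq tn\left(1+\frac{1+\alpha_2}{r-1-\alpha_2}\right)$. Moreover, if $m_1+m_2\geq t(1-\tau)n$ and $\alpha_1>0$, then (ii) $m_1\leq\left(\tau+\frac{1+\alpha_2+\alpha_2 r}{r-1-\alpha_2}\right)\frac{tn}{\alpha_1}$.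
   Context: A hypergraph $\mathcal H$ has a finite vertex set $V(\mathcal H)$ and a finite set of edges, each edge $e$ with a nonempty set $V(e)\subseteq V(\mathcal H)$ (multiple edges allowed); $n$-vertex means $|V(\mathcal H)|=n$, and the size of $e$ is $|V(e)|$. The codegree of $\mathcal H$ is the maximum over distinct vertices $u,v$ of the number of edges containing both. $N(e)$ is the set of edges $f\neq e$ with $V(e)\cap V(f)\neq\emptyset$. *)

From HB Require Import structures.
From mathcomp Require Import all_boot all_order all_algebra.
Set Implicit Arguments. Unset Strict Implicit. Unset Printing Implicit Defensive.
Import Order.TTheory GRing.Theory Num.Theory.

(* A hypergraph: vertex type V (finite), edge index type E (finite, so
   multiple edges with the same vertex set are allowed), and the incidence
   map vert : E -> {set V}.  Nonemptiness of edges is a separate hypothesis. *)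

Definition codeg (V E : finType) (vert : E -> {set V}) (u v : V) : nat :=
  #|[set f : E | (u \in vert f) && (v \in vert f)]|.

Definition codegree_le (V E : finType) (vert : E -> {set V}) (t : nat) : Prop :=
  forall u v : V, u != v -> codeg vert u v <= t.

Definition nbhd (V E : finType) (vert : E -> {set V}) (e : E) : {set E} :=
  [set f : E | (f != e) && (vert e :&: vert f != set0)].

From HB Require Import structures.
From mathcomp Require Import all_boot all_order all_algebra.
From mathcomp Require Import ring lra.
Set Implicit Arguments. Unset Strict Implicit. Unset Printing Implicit Defensive.
Import Order.TTheory GRing.Theory Num.Theory.

(* Double counting: every f in N(e) contains some vertex u of e, and then the
   |f| - 1 pairs (u, w) with w another vertex of f each count f once towards
   codeg(u, w); hence sum_{f in N(e)} (|f| - 1) <= r n t.  An edge counted by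
   m1 contributes at least (1 + a1)(r - 1 - a2) to this sum and one counted by
   m2 at least (r - 1 - a2)/(1 + a2), which gives (i).  For (ii), substitute
   m2 >= t(1 - tau)n - m1 into (i). *)

Section DoubleCounting.
Variables (V E : finType) (vert : E -> {set V}).

Definition link (f : E) (u : V) : {set V} :=
  [set w | [&& u \in vert f, w \in vert f & w != u]].

Lemma card_link (f : E) (u : V) : u \in vert f -> #|link f u| = #|vert f| - 1.
Proof.
move=> uf; rewrite (cardsD1 u (vert f)) uf add1n subn1 /=.
by apply: eq_card => w; rewrite !inE uf /= andbC.
Qed.

Lemma sum_card_link (u : V) :
  \sum_(f : E) #|link f u| = \sum_(w | w != u) codeg vert u w.
Proof.
rewrite /codeg.
under eq_bigr do rewrite -sum1_card big_mkcond.
under [RHS]eq_bigr do rewrite -sum1_card big_mkcond.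
rewrite exchange_big [LHS](bigID (fun w => w != u)) /=.
rewrite [X in _ + X]big1 ?addn0 => [|w]; last first.
  by rewrite negbK => /eqP ->; apply: big1 => f _; rewrite !inE eqxx !andbF.
by apply: eq_bigr => w wu; apply: eq_bigr => f _; rewrite !inE wu andbT.
Qed.

Lemma sum_nbhd_card_le (t : nat) (e : E) : codegree_le vert t ->
  \sum_(f in nbhd vert e) (#|vert f| - 1) <= #|vert e| * #|V| * t.
Proof.
move=> hcod.
apply: (@leq_trans (\sum_(f in nbhd vert e) \sum_(u in vert e) #|link f u|)).
  apply: leq_sum => f; rewrite inE => /andP [_ /set0Pn [u]].
  rewrite inE => /andP [ue uf].
  by rewrite -(card_link uf) (bigD1 u) //= leq_addr.
apply: (@leq_trans (\sum_f \sum_(u in vert e) #|link f u|)).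
  by rewrite [X in _ <= X](bigID [in nbhd vert e]) leq_addr.
rewrite exchange_big -mulnA -sum_nat_const; apply: leq_sum => u _.
apply: (@leq_trans (\sum_(w | w != u) t)).
  by rewrite sum_card_link; apply: leq_sum => w wu; rewrite hcod // eq_sym.
by rewrite sum_nat_const leq_mul2r max_card orbT.
Qed.

End DoubleCounting.

Local Open Scope ring_scope.

Lemma ler_sum_disjoint (R : numDomainType) (I : finType) (S A B : {set I}) (g : I -> R) :
  A :|: B \subset S -> [disjoint A & B] -> {in S, forall i, 0 <= g i} ->
  \sum_(i in A) g i + \sum_(i in B) g i <= \sum_(i in S) g i.
Proof.
move=> sABS dAB g_ge0.
rewrite -bigU // (big_setID (A := S) (A :|: B)) (setIidPr sABS) /=.
rewrite (eq_bigl [in A :|: B]) => [|i]; last by rewrite !inE.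
by rewrite lerDl sumr_ge0 // => i /setDP [/g_ge0].
Qed.

Section Neighbourhood.
Variables (R : realFieldType) (V E : finType) (vert : E -> {set V}) (t : nat) (e : E).
Variables (a1 a2 : R).
Hypotheses (hne : forall f : E, vert f != set0) (hcod : codegree_le vert t).

Local Notation n := ((#|V|)%:R : R).
Local Notation r := ((#|vert e|)%:R : R).
Local Notation esize f := ((#|vert f|)%:R : R).
Local Notation large := [set f in nbhd vert e | (1 + a1) * r <= esize f].
Local Notation medium :=
  [set f in nbhd vert e | (esize f < (1 + a1) * r) && (r / (1 + a2) <= esize f)].

Lemma sum_nbhd_esize_le : \sum_(f in nbhd vert e) (esize f - 1) <= r * n * t%:R.
Proof.
rewrite (eq_bigr (fun f => (#|vert f| - 1)%N%:R)) => [|f _]; last first.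
  by rewrite natrB // card_gt0 hne.
by rewrite -natr_sum -!natrM ler_nat sum_nbhd_card_le.
Qed.

Lemma weighted_nbhd_count_le : 0 <= a1 -> 0 <= a2 -> 1 + a2 < r ->
  (1 + a1) * (#|large|)%:R + (#|medium|)%:R / (1 + a2)
    <= t%:R * n * (1 + (1 + a2) / (r - 1 - a2)).
Proof.
move=> ha1 ha2 hr; set D := r - 1 - a2.
have D_gt0 : 0 < D by rewrite /D; lra.
have a2S_gt0 : 0 < 1 + a2 by lra.
have large_medium_disjoint : [disjoint large & medium].
  rewrite -setI_eq0; apply/eqP/setP => f; rewrite !inE.
  by case: leP; rewrite ?andbF.
have large_medium_sub : large :|: medium \subset nbhd vert e.
  by apply/subsetP => f; rewrite !inE -andb_orr => /andP [].
have esize_sub1_ge0 f : 0 <= esize f - 1 by rewrite subr_ge0 ler1n card_gt0 hne.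
have large_sum : (#|large|)%:R * ((1 + a1) * D) <= \sum_(f in large) (esize f - 1).
  rewrite mulr_natl -sumr_const; apply: ler_sum => f; rewrite inE => /andP [_].
  rewrite /D; nra.
have medium_sum : (#|medium|)%:R * (D / (1 + a2)) <= \sum_(f in medium) (esize f - 1).
  rewrite mulr_natl -sumr_const; apply: ler_sum => f; rewrite inE => /andP [_ /andP [_]].
  suff -> : D / (1 + a2) = r / (1 + a2) - 1 by lra.
  by rewrite /D; field; rewrite gt_eqF.
have := ler_sum_disjoint large_medium_sub large_medium_disjoint (fun f _ => esize_sub1_ge0 f).
move=> /(le_trans (lerD large_sum medium_sum))/le_trans/(_ sum_nbhd_esize_le) total.
have -> : t%:R * n * (1 + (1 + a2) / D) = r * n * t%:R / D.
  by rewrite /D; field; rewrite gt_eqF.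
rewrite ler_pdivlMr //; apply: le_trans total; rewrite le_eqVlt; apply/orP; left.
by apply/eqP; field; rewrite gt_eqF.
Qed.

End Neighbourhood.

Lemma le_of_weighted_sum_le (R : realFieldType) (a1 a2 tau X u x y : R) :
  0 < a1 -> 0 <= a2 -> 0 <= tau -> 0 <= X -> 1 <= u -> 0 <= x ->
  (1 + a1) * x + y / (1 + a2) <= X * u -> X * (1 - tau) <= x + y ->
  x <= (tau + (u - 1 + a2 * u)) * (X / a1).
Proof.
move=> a1_gt0 a2_ge0 tau_ge0 X_ge0 u_ge1 x_ge0 weighted total.
set q := (1 + a2)^-1 in weighted.
have q_gt0 : 0 < q by rewrite invr_gt0; lra.
have q_le1 : q <= 1 by rewrite invr_le1 ?unitf_gt0; lra.
have q_a2 : 1 - q = a2 * q by rewrite /q; field; rewrite gt_eqF //; lra.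
rewrite mulrA ler_pdivlMr //.
have : q * (X * (1 - tau)) <= q * (x + y) by rewrite ler_pM2l.
have : 0 <= (1 - q) * x by apply: mulr_ge0; lra.
have : 0 <= (1 - q) * (X * tau) by apply: mulr_ge0; [lra | exact: mulr_ge0].
have : 0 <= X * a2 * (u - q) by apply: mulr_ge0; [exact: mulr_ge0 | lra].
nra.
Qed.

Theorem proposition3p6 (R : realFieldType) (V E : finType)
  (vert : E -> {set V}) (t : nat) (a1 a2 tau : R)
  (ha1 : 0 <= a1) (ha2 : 0 <= a2) (htau : 0 <= tau)
  (hne : forall f : E, vert f != set0)
  (hcod : codegree_le vert t)
  (hsize : forall f : E, 2 * (1 + a2) ^+ 2 <= (#|vert f|)%:R)
  (e : E) :
  let n : R := (#|V|)%:R in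
  let r : R := (#|vert e|)%:R in
  let m1 : R := (#|[set f in nbhd vert e | (1 + a1) * r <= (#|vert f|)%:R]|)%:R in
  let m2 : R := (#|[set f in nbhd vert e |
                    ((#|vert f|)%:R < (1 + a1) * r) && (r / (1 + a2) <= (#|vert f|)%:R)]|)%:R in
  ((1 + a1) * m1 + m2 / (1 + a2) <= t%:R * n * (1 + (1 + a2) / (r - 1 - a2)))
  /\
  (m1 + m2 >= t%:R * (1 - tau) * n -> 0 < a1 ->
     m1 <= (tau + (1 + a2 + a2 * r) / (r - 1 - a2)) * (t%:R * n / a1)).
Proof.
move=> n r m1 m2.
have hr : 1 + a2 < r by have := hsize e; nra.
have weighted := weighted_nbhd_count_le hne hcod ha1 ha2 hr.
split=> // total a1_gt0.
set u := 1 + (1 + a2) / (r - 1 - a2) in weighted.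
have -> : (1 + a2 + a2 * r) / (r - 1 - a2) = u - 1 + a2 * u.
  by rewrite /u; field; rewrite gt_eqF //; lra.
apply: le_of_weighted_sum_le weighted _ => //.
- by rewrite mulr_ge0.
- by rewrite /u lerDl divr_ge0 //; lra.
- by rewrite mulrAC.
Qed.
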